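(* Assume the setting below (in particular $\gcd(a,d)=1$), and let $(x_0,y_0)\in L$ be the point with $\varphi(x_0,y_0)=g(\mathcal{S})+a$. If $(x_0,y_0)=(s_v-s_{v+1}-1,\,P_{v+1}-1)$, then (a1) $\varphi(x,y)+\varphi(x_0-x,y_0-y)\equiv\varphi(x_0,y_0)\pmod a$ for all integers $0\le x\le x_0$, $0\le y\le y_0$; (a2) $\varphi(x,y)+\varphi(x_0+s_v-x,\,y_0-P_v-y)\equiv\varphi(x_0,y_0)\pmod a$ for all integers $x_0<x\le s_v-1$, $0\le y\le y_0-P_v$. If $(x_0,y_0)=(s_v-1,\,P_{v+1}-P_v-1)$, then (b1) $\varphi(x,y)+\varphi(x_0-x,y_0-y)\equiv\varphi(x_0,y_0)\pmod a$ for all integers $0\le x\le x_0$, $0\le y\le y_0$; (b2) $\varphi(x,y)+\varphi(x_0-s_{v+1}-x,\,y_0+P_{v+1}-y)\equiv\varphi(x_0,y_0)\pmod a$ for all integers $0\le x\le x_0-s_{v+1}$, $y_0<y\le y_0+P_{v+1}$.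
   Context: Setting (AA-semigroups). Let $a,d,k,c$ be positive integers with $\gcd(a,a+d,\ldots,a+kd,c)=1$ and $\gcd(a,d)=1$, and let $\mathcal{S}=\langle a,a+d,\ldots,a+kd,c\rangle$ be the numerical semigroup of non-negative integer combinations of these generators; $g(\mathcal{S})$ is its Frobenius number (largest integer not in $\mathcal{S}$). Put $s_{-1}=a$ and let $s_0$ be the unique integer with $ds_0\equiv c\pmod a$, $0\le s_0<a$. If $s_0=0$ set $m=-1$. Otherwise define $q_{i+1},s_{i+1}$ for $i=0,1,2,\ldots$ by $s_{i-1}=q_{i+1}s_i-s_{i+1}$ with $0\le s_{i+1}<s_i$, and let $m$ be the index with $s_m>0=s_{m+1}$ (so $s_m=\gcd(a,c)$). Define $P_{-1}=0$, $P_0=1$, $P_{i+1}=q_{i+1}P_i-P_{i-1}$ for $i=0,\ldots,m$, and $R_i=\frac1a\big((a+kd)s_i-kcP_i\big)$ for $-1\le i\le m+1$; these are integers with $-c/s_m=R_{m+1}<R_m<\cdots<R_0<R_{-1}=a+kd$. Let $v$ be the unique integer with $R_{v+1}\le0<R_v$. Let $L=A\cup B$, where $A=\{(x,y)\in\mathbb{Z}^2:0\le x\le s_v-1,\ 0\le y\le P_{v+1}-P_v-1\}$ and $B=\{(x,y)\in\mathbb{Z}^2:0\le x\le s_v-s_{v+1}-1,\ P_{v+1}-P_v\le y\le P_{v+1}-1\}$. Define $\varphi:\mathbb{Z}^2\to\mathbb{Z}$, $\varphi(x,y)=\lceil x/k\rceil a+xd+yc$. It is known (Rødseth) that $|L|=a$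 and $\varphi$ maps $L$ bijectively onto $\mathrm{Ap}(\mathcal{S};a)=\{s\in\mathcal{S}:s-a\notin\mathcal{S}\}$; consequently $g(\mathcal{S})+a=\max\varphi(L)$ is attained at $(s_v-s_{v+1}-1,P_{v+1}-1)$ or at $(s_v-1,P_{v+1}-P_v-1)$. *)

From Stdlib Require Import ZArith Lia.
Open Scope Z_scope.

(* phi(x,y) = ceil(x/k) a + x d + y c ; ceil(x/k) = - floor(-x/k). *)
Definition phi (a d k c x y : Z) : Z := (- ((- x) / k)) * a + x * d + y * c.

Fixpoint sumZ (n : nat) (g : nat -> Z) : Z :=
  match n with O => 0 | S n' => sumZ n' g + g n' end.

(* n belongs to S = < a, a+d, ..., a+kd, c > *)
Definition inS (a d k c n : Z) : Prop :=
  exists (f : nat -> Z) (e : Z),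
    (forall j, 0 <= f j) /\ 0 <= e /\
    n = sumZ (S (Z.to_nat k)) (fun j => f j * (a + Z.of_nat j * d)) + e * c.

Definition is_frobenius (a d k c g : Z) : Prop :=
  ~ inS a d k c g /\ forall n, g < n -> inS a d k c n.

(* The data s_i, q_i, P_i (i >= -1) and m of the context, characterized by their
   defining properties (which determine them uniquely). *)
Definition rodseth_data (a d c : Z) (s q P : Z -> Z) (m : Z) : Prop :=
  s (-1) = a /\
  0 <= s 0 < a /\ (d * s 0 - c) mod a = 0 /\
  -1 <= m /\
  (forall i, -1 <= i <= m -> 0 < s i) /\ s (m + 1) = 0 /\
  (forall i, 0 <= i <= m ->
     s (i - 1) = q (i + 1) * s i - s (i + 1) /\ 0 <= s (i + 1) < s i) /\
  P (-1) = 0 /\ P 0 = 1 /\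
  (forall i, 0 <= i <= m -> P (i + 1) = q (i + 1) * P i - P (i - 1)).

(* R_i = ((a + k d) s_i - k c P_i) / a  (an exact division) *)
Definition R (a d k c : Z) (s P : Z -> Z) (i : Z) : Z :=
  ((a + k * d) * s i - k * c * P i) / a.

Definition inL (s P : Z -> Z) (v x y : Z) : Prop :=
  (0 <= x <= s v - 1 /\ 0 <= y <= P (v + 1) - P v - 1) \/
  (0 <= x <= s v - s (v + 1) - 1 /\ P (v + 1) - P v <= y <= P (v + 1) - 1).

(* Modulo a, phi(x, y) is just x d + y c, and the Rødseth data satisfy
   d s_i = c P_i (mod a) for every i: this holds for i = -1 and i = 0 by the
   choice of s_0, and the defect d s_i - c P_i obeys the same three-term
   recurrence as s_i and P_i.  Each congruence of the theorem then compares
   two lattice points whose coordinate sums differ by 0, (s_v, -P_v) or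
   (-s_(v+1), P_(v+1)). *)
From Stdlib Require Import ZArith Lia.
Open Scope Z_scope.

Lemma phi_add_mod (a d k c x y x' y' x0 y0 : Z) :
  0 < a -> (a | (x + x' - x0) * d + (y + y' - y0) * c) ->
  (phi a d k c x y + phi a d k c x' y') mod a = phi a d k c x0 y0 mod a.
Proof.
  intros Ha [t Ht]; unfold phi.
  set (u := - (- x / k)); set (u' := - (- x' / k)); set (u0 := - (- x0 / k)).
  replace (u * a + x * d + y * c + (u' * a + x' * d + y' * c))
    with (u0 * a + x0 * d + y0 * c + (u + u' - u0 + t) * a) by nia.
  apply Z.mod_add; lia.
Qed.

Section RodsethData.

Variables (a d c m : Z) (s q P : Z -> Z).
Hypothesis Ha : 0 < a.
Hypothesis Hdata : rodseth_data a d c s q P m.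

Lemma rodseth_defect_rec (i : Z) : 0 <= i <= m ->
  d * s (i + 1) - c * P (i + 1)
  = q (i + 1) * (d * s i - c * P i) - (d * s (i - 1) - c * P (i - 1)).
Proof.
  intros Hi.
  destruct Hdata as (_ & _ & _ & _ & _ & _ & Hs & _ & _ & HP).
  destruct (Hs i Hi) as [Hsi _].
  rewrite (HP i Hi).
  replace (s (i + 1)) with (q (i + 1) * s i - s (i - 1)) by lia.
  ring.
Qed.

Lemma rodseth_defect_consecutive (i : Z) : -1 <= i <= m ->
  (a | d * s i - c * P i) /\ (a | d * s (i + 1) - c * P (i + 1)).
Proof.
  intros [Hlo Hhi]; revert Hhi.
  apply (Z.le_ind (fun j => j <= m ->
      (a | d * s j - c * P j) /\ (a | d * s (j + 1) - c * P (j + 1))))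
    with (n := -1); [ | | | exact Hlo].
  - intros j j' ->; reflexivity.
  - destruct Hdata as (Hsm1 & _ & Hs0 & _ & _ & _ & _ & HPm1 & HP0 & _).
    intros _; simpl; rewrite Hsm1, HPm1, HP0; split.
    + exists d; ring.
    + apply Z.mod_divide; [lia | now rewrite Z.mul_1_r].
  - intros j Hj IH Hj'.
    destruct IH as [Hdj Hdj1]; [lia |].
    unfold Z.succ; split; [exact Hdj1 |].
    rewrite rodseth_defect_rec by lia.
    replace (j + 1 - 1) with j by ring.
    apply Z.divide_sub_r; [apply Z.divide_mul_r |]; assumption.
Qed.

Lemma rodseth_defect_divide (i : Z) : -1 <= i <= m + 1 ->
  (a | d * s i - c * P i).
Proof.
  intros Hi.
  destruct (Z.eq_dec i (m + 1)) as [-> | Hne].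
  - destruct Hdata as (_ & _ & _ & Hm & _).
    apply (rodseth_defect_consecutive m); lia.
  - apply (rodseth_defect_consecutive i); lia.
Qed.

End RodsethData.

Theorem lemma4 (a d k c : Z) (s q P : Z -> Z) (m v x0 y0 : Z) :
  0 < a -> 0 < d -> 0 < k -> 0 < c ->
  Z.gcd (Z.gcd a d) c = 1 ->
  Z.gcd a d = 1 ->
  rodseth_data a d c s q P m ->
  -1 <= v <= m ->
  R a d k c s P (v + 1) <= 0 < R a d k c s P v ->
  inL s P v x0 y0 ->
  is_frobenius a d k c (phi a d k c x0 y0 - a) ->
  ((x0 = s v - s (v + 1) - 1 /\ y0 = P (v + 1) - 1) ->
     (forall x y, 0 <= x <= x0 -> 0 <= y <= y0 ->
        (phi a d k c x y + phi a d k c (x0 - x) (y0 - y)) mod a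
          = phi a d k c x0 y0 mod a) /\
     (forall x y, x0 < x <= s v - 1 -> 0 <= y <= y0 - P v ->
        (phi a d k c x y + phi a d k c (x0 + s v - x) (y0 - P v - y)) mod a
          = phi a d k c x0 y0 mod a)) /\
  ((x0 = s v - 1 /\ y0 = P (v + 1) - P v - 1) ->
     (forall x y, 0 <= x <= x0 -> 0 <= y <= y0 ->
        (phi a d k c x y + phi a d k c (x0 - x) (y0 - y)) mod a
          = phi a d k c x0 y0 mod a) /\
     (forall x y, 0 <= x <= x0 - s (v + 1) -> y0 < y <= y0 + P (v + 1) ->
        (phi a d k c x y + phi a d k c (x0 - s (v + 1) - x) (y0 + P (v + 1) - y)) mod a
          = phi a d k c x0 y0 mod a)).
Proof.
  intros Ha _ _ _ _ _ Hdata Hv _ _ _.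
  pose proof (rodseth_defect_divide a d c m s q P Ha Hdata v ltac:(lia)) as Hdiv_v.
  pose proof (rodseth_defect_divide a d c m s q P Ha Hdata (v + 1) ltac:(lia))
    as Hdiv_v1.
  assert (Hcomplement : forall x y,
    (phi a d k c x y + phi a d k c (x0 - x) (y0 - y)) mod a
      = phi a d k c x0 y0 mod a).
  { intros x y; apply phi_add_mod; [exact Ha |]; exists 0; ring. }
  split; intros _; split; intros x y _ _; try apply Hcomplement;
    apply phi_add_mod; try exact Ha.
  - replace (_ * d + _ * c) with (d * s v - c * P v) by ring; exact Hdiv_v.
  - replace (_ * d + _ * c) with (- (d * s (v + 1) - c * P (v + 1))) by ring.
    now apply Z.divide_opp_r.
Qed.
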